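(* Let $\mathcal S,\mathcal T$ be Hermitian operators on a finite-dimensional Hilbert space satisfying $\mathcal S^2+\mathcal T^2=\mathbb 1$, let $|\psi\rangle$ be a unit vector, and let $m$ be a positive integer. Then $$\langle\psi|(\mathbb 1+\mathcal S)^m+(\mathbb 1+\mathcal T)^m|\psi\rangle\le\max_{\theta\in\mathbb R}\Big((1+\cos\theta)^m+(1+\sin\theta)^m\Big).$$ *)

(* Finite-dimensional Hilbert space = C^n with C an algebraically
   closed numeric field (e.g. algC), standard inner product. *)
From HB Require Import structures.
From mathcomp Require Import all_boot all_order all_algebra.
Set Implicit Arguments. Unset Strict Implicit. Unset Printing Implicit Defensive.
Import Order.TTheory GRing.Theory Num.Theory.
Local Open Scope ring_scope.

Definition adjmx (C : numClosedFieldType) (m n : nat) (A : 'M[C]_(m, n)) : 'M[C]_(n, m) :=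
  (map_mx Num.conj A)^T.

Definition is_hermitian (C : numClosedFieldType) (n : nat) (A : 'M[C]_n) : Prop :=
  adjmx A = A.

Definition expect (C : numClosedFieldType) (n : nat) (A : 'M[C]_n) (psi : 'cV[C]_n) : C :=
  (adjmx psi *m A *m psi) 0 0.

(* Diagonalize S = U^* diag(d) U.  In that basis T' := U T U^* is Hermitian with
   T'^2 = diag(1 - d^2), so T' commutes with B := diag(sqrt(1 - d^2)) and
   <T'^k> <= <B^k> for every k: with equality for k even, and for k odd because
   B^(k-1) (B - T') is a nonnegative operator.  Expanding (1 + X)^m binomially,
   <(1 + S)^m + (1 + T)^m> is then at most a convex combination of values
   (1 + c)^m + (1 + s)^m with c^2 + s^2 = 1.  This function attains its maximum on
   the circle: there it is a polynomial in c + s, which ranges over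
   [-sqrt 2, sqrt 2], and the real elements of C form a real closed field. *)

From HB Require Import structures.
From mathcomp Require Import all_boot all_order all_algebra.
From mathcomp Require Import polyrcf sesquilinear spectral ring.
Import Order.TTheory GRing.Theory Num.Theory Num.Def.
Local Open Scope ring_scope.
Set Implicit Arguments. Unset Strict Implicit. Unset Printing Implicit Defensive.

(** * The real elements of a numeric closed field form a real closed field *)

Definition realsub (C : numClosedFieldType) := {x : C | x \is Num.real}.

HB.instance Definition _ (C : numClosedFieldType) :=
  [isSub for (@sval C _ : realsub C -> C)].
HB.instance Definition _ (C : numClosedFieldType) := [Choice of realsub C by <:].
HB.instance Definition _ (C : numClosedFieldType) :=
  [SubChoice_isSubComUnitRing of realsub C by <:].
HB.instance Definition _ (C : numClosedFieldType) :=
  [SubComUnitRing_isSubIntegralDomain of realsub C by <:].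
HB.instance Definition _ (C : numClosedFieldType) :=
  [SubIntegralDomain_isSubField of realsub C by <:].

Section RealsubOrder.
Variable C : numClosedFieldType.
Local Notation R := (realsub C).

Definition realsub_le (x y : R) := val x <= val y.
Definition realsub_lt (x y : R) := val x < val y.
Definition realsub_norm (x : R) : R := Sub `|val x| (normr_real (val x)).

Lemma realsub_le0_add (x y : R) :
  realsub_le 0 x -> realsub_le 0 y -> realsub_le 0 (x + y).
Proof. exact: addr_ge0. Qed.

Lemma realsub_le0_mul (x y : R) :
  realsub_le 0 x -> realsub_le 0 y -> realsub_le 0 (x * y).
Proof. exact: mulr_ge0. Qed.

Lemma realsub_le0_anti (x : R) : realsub_le 0 x -> realsub_le x 0 -> x = 0.
Proof.
rewrite /realsub_le => x_ge0 x_le0; apply: val_inj => /=.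
by apply/eqP; rewrite eq_le; apply/andP.
Qed.

Lemma realsub_subr_ge0 (x y : R) : realsub_le 0 (y - x) = realsub_le x y.
Proof. by rewrite /realsub_le /= subr_ge0. Qed.

Lemma realsub_le0_total (x : R) : realsub_le 0 x || realsub_le x 0.
Proof. by rewrite /realsub_le /=; case: x => x /= /orP[]->; rewrite ?orbT. Qed.

Lemma realsub_normN (x : R) : realsub_norm (- x) = realsub_norm x.
Proof. by apply: val_inj; rewrite /= normrN. Qed.

Lemma realsub_ger0_norm (x : R) : realsub_le 0 x -> realsub_norm x = x.
Proof. by rewrite /realsub_le => x_ge0; apply: val_inj; rewrite /= ger0_norm. Qed.

Lemma realsub_lt_def (x y : R) : realsub_lt x y = (y != x) && realsub_le x y.
Proof. by rewrite /realsub_lt /realsub_le lt_def. Qed.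

End RealsubOrder.

HB.instance Definition _ (C : numClosedFieldType) :=
  Num.IntegralDomain_isLeReal.Build (realsub C)
    (@realsub_le0_add C) (@realsub_le0_mul C) (@realsub_le0_anti C)
    (@realsub_subr_ge0 C) (@realsub_le0_total C) (@realsub_normN C)
    (@realsub_ger0_norm C) (@realsub_lt_def C).

Lemma XsubC_out_itv_gt0 (R : realDomainType) (a b r : R) : a <= b -> ~~ (a <= r <= b) ->
  0 < ('X - r%:P).[a] * ('X - r%:P).[b].
Proof.
rewrite negb_and -!ltNge !hornerXsubC => le_ab /orP[lt_ra|lt_br].
  by rewrite mulr_gt0 ?subr_gt0 ?(lt_le_trans lt_ra).
by rewrite nmulr_rgt0 ?subr_lt0 ?(le_lt_trans le_ab).
Qed.

Section RealsubClosed.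
Variable C : numClosedFieldType.
Local Notation R := (realsub C).

Lemma map_realsub_conj (p : {poly R}) :
  map_poly Num.conj (map_poly val p) = map_poly val p.
Proof.
by rewrite -map_poly_comp; apply: eq_map_poly => x /=; apply/CrealP; case: x.
Qed.

Lemma realsub_horner (p : {poly R}) x : val p.[x] = (map_poly val p).[val x].
Proof. by rewrite horner_map. Qed.

(* A non-real root [z] of [p] comes with the root [z^*], so [p] is divisible by
   the real quadratic [(X - z)(X - z^* )], which is [|x - z|^2 > 0] on [R]. *)
Lemma realsub_poly_factor (p : {poly R}) : size p != 1%N ->
  exists2 d : {poly R}, d %| p & (1 < size d)%N /\
    ((exists r, d = 'X - r%:P) \/ forall x, 0 < d.[x]).
Proof.
move=> p_nconst; have := p_nconst; rewrite -(size_map_poly val).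
case/closed_rootP => z pz.
have [zR|zNR] := boolP (z \is Num.real).
  pose r : R := Sub z zR.
  exists ('X - r%:P); last by rewrite size_XsubC; split=> //; left; exists r.
  by rewrite dvdp_XsubCl /root -(inj_eq val_inj) /= realsub_horner.
have zzR : z + z^* \is Num.real by apply/CrealP; rewrite rmorphD /= conjCK addrC.
have nzR : z * z^* \is Num.real by rewrite -normCK rpredX // normr_real.
pose d := 'X^2 - (Sub (z + z^*) zzR : R)%:P * 'X + (Sub (z * z^*) nzR : R)%:P.
have map_d : map_poly val d = ('X - z%:P) * ('X - (z^*)%:P).
  rewrite /d rmorphD rmorphB rmorphXn rmorphM /= !(map_polyX val) !(map_polyC val) /=.
  by rewrite polyCD polyCM; ring.
have pzJ : root (map_poly val p) z^*.
  by rewrite -map_realsub_conj /root horner_map /= fmorph_eq0.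
exists d.
  rewrite -(dvdp_map val) map_d.
  have := uniq_roots_dvdp (p := map_poly val p) (rs := [:: z; z^*]).
  rewrite !big_cons big_nil mulr1; apply; first by rewrite /= pz pzJ.
  rewrite /= /diff_roots mulrC eqxx unitfE subr_eq0 eq_sym /= andbT andbT.
  by apply: contra zNR => /eqP zJ; apply/CrealP.
split.
  by rewrite -(size_map_poly val) map_d size_mul ?polyXsubC_eq0 // !size_XsubC.
right=> x; change (0 < val d.[x]); rewrite realsub_horner map_d.
rewrite hornerM !hornerXsubC.
have -> : val x - z^* = (val x - z)^* by rewrite rmorphB /= (conj_Creal (valP x)).
rewrite -normCK.
by rewrite exprn_gt0 // normr_gt0 subr_eq0; apply: contra zNR => /eqP <-; apply: valP.
Qed.

Lemma realsub_ivt : Num.real_closed_axiom R.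
Proof.
move=> p a b le_ab /andP[pa_le0 pb_ge0].
have {pa_le0 pb_ge0}: p.[a] * p.[b] <= 0 by apply: mulr_le0_ge0.
have [k] := ubnP (size p); elim: k p => // k IHk p size_p pab.
have [->|p_neq0] := eqVneq p 0; first by exists a; rewrite ?lexx ?le_ab ?root0.
have [/eqP p_const|/realsub_poly_factor[d dp [size_d d_sign]]] :=
  eqVneq (size p) 1%N.
  have [c c_neq0 p_c] := size_poly1P p p_const.
  by move: pab; rewrite p_c !hornerC -expr2 leNgt exprn_even_gt0 // c_neq0.
suff recurse : 0 < d.[a] * d.[b] -> exists2 x, a <= x <= b & root p x.
  case: d_sign => [[r d_r]|d_gt0]; last by apply: recurse; rewrite mulr_gt0.
  have [r_in|r_out] := boolP (a <= r <= b).
    by exists r => //; apply: root_dvdp dp _; rewrite d_r root_XsubC.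
  by apply: recurse; rewrite d_r XsubC_out_itv_gt0.
move=> dab; have size_q : (size (p %/ d)%R < size p)%N.
  have d_neq0 : d != 0 by rewrite -size_poly_gt0 ltnW.
  by rewrite size_divp // ltn_subrL -subn1 subn_gt0 size_d size_poly_gt0.
have [x x_in qx] : exists2 x, a <= x <= b & root (p %/ d) x.
  apply: IHk; first exact: leq_trans size_q size_p.
  by rewrite -(pmulr_lle0 _ dab) mulrACA -!hornerM divpK.
by exists x; rewrite // -(divpK dp) rootM qx.
Qed.

End RealsubClosed.

HB.instance Definition _ (C : numClosedFieldType) :=
  Num.RealField_isClosed.Build (realsub C) (@realsub_ivt C).

(** * Maxima of polynomials and of the target function on the circle *)

Lemma seq_argmax (T : eqType) (R : realDomainType) (f : T -> R) (x0 : T) s :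
  exists2 x, x \in x0 :: s & forall y, y \in x0 :: s -> f y <= f x.
Proof.
elim: s x0 => [|z s IHs] x0.
  by exists x0 => [|y]; rewrite ?mem_head // inE => /eqP->.
have [x xs x_max] := IHs z.
have [le_x0x|lt_xx0] := leP (f x0) (f x).
  exists x => [|y]; first by rewrite inE xs orbT.
  by rewrite inE => /orP[/eqP->//|]; apply: x_max.
exists x0 => [|y]; first exact: mem_head.
by rewrite inE => /orP[/eqP->//|/x_max le_yx]; apply: le_trans le_yx (ltW lt_xx0).
Qed.

Section PolyMax.
Variable R : rcfType.
Implicit Types (p : {poly R}) (a b l r y : R).

Lemma poly_le_max_noroot_deriv p l r y : {in `]l, r[, forall z, ~~ root p^`() z} ->
  l <= y <= r -> p.[y] <= Num.max p.[l] p.[r].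
Proof.
move=> p'_noroot /andP[le_ly le_yr].
have [->|ne_yl] := eqVneq y l; first by rewrite le_max lexx.
have [->|ne_yr] := eqVneq y r; first by rewrite le_max lexx orbT.
have y_in : y \in `]l, r[ by rewrite in_itv /= !lt_neqAle le_ly le_yr ne_yr (eq_sym l) ne_yl.
have l_in : l \in `[l, r] by rewrite in_itv /= lexx (le_trans le_ly).
have r_in : r \in `[l, r] by rewrite in_itv /= lexx (le_trans le_ly).
have y_in' : y \in `[l, r] by rewrite in_itv /= le_ly.
have sg_p' z : z \in `]l, r[ -> sgr p^`().[z] = sgr p^`().[y].
  by move=> z_in; apply: (polyrN0_itv p'_noroot y_in z_in).
rewrite le_max; case: (ltgtP p^`().[y] 0) => [p'y_lt0|p'y_gt0|/eqP p'y0].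
- apply/orP; left; rewrite -lerN2 -!hornerN.
  apply: (ler_hornerW (a := l) (b := r)) => // z /sg_p'.
  by rewrite derivN hornerN oppr_ge0 (ltr0_sg p'y_lt0) => /eqP; rewrite sgr_cp0 => /ltW.
- apply/orP; right; apply: (ler_hornerW (a := l) (b := r)) => // z /sg_p'.
  by rewrite (gtr0_sg p'y_gt0) => /eqP; rewrite sgr_cp0 => /ltW.
- by have := p'_noroot y y_in; rewrite /root p'y0.
Qed.

Lemma prev_root_in_roots p a b y : p != 0 -> a < y < b ->
  prev_root p a y \in a :: b :: roots p a b.
Proof.
move=> p_neq0 /andP[lt_ay lt_yb].
case: prev_rootP => [/eqP|z _ pz z_in _|c _ -> _].
- by rewrite (negPf p_neq0).
- rewrite !inE root_in_roots ?orbT ?/root ?pz //.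
  by rewrite in_itv /= (itvP z_in) (lt_trans _ lt_yb) // (itvP z_in).
- by rewrite (min_idPl (ltW lt_ay)) mem_head.
Qed.

Lemma next_root_in_roots p a b y : p != 0 -> a < y < b ->
  next_root p y b \in a :: b :: roots p a b.
Proof.
move=> p_neq0 /andP[lt_ay lt_yb].
case: next_rootP => [/eqP|z _ pz z_in _|c _ -> _].
- by rewrite (negPf p_neq0).
- rewrite !inE root_in_roots ?orbT ?/root ?pz //.
  by rewrite in_itv /= (itvP z_in) (lt_trans lt_ay) // (itvP z_in).
- by rewrite (max_idPl (ltW lt_yb)) !inE eqxx orbT.
Qed.

(* A maximum is attained at an end point or at a root of the derivative. *)
Lemma poly_itv_max p a b : a <= b ->
  exists2 x, a <= x <= b & forall y, a <= y <= b -> p.[y] <= p.[x].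
Proof.
move=> le_ab; set s := b :: roots p^`() a b.
have [x xs x_max] := seq_argmax (horner p) a s.
have s_itv z : z \in a :: s -> a <= z <= b.
  rewrite !inE => /orP[/eqP->|/orP[/eqP->|/roots_in z_in]]; rewrite ?lexx ?le_ab //.
  by rewrite !(itvP z_in).
exists x => [|y /andP[le_ay le_yb]]; first exact: s_itv.
suff [z zs le_yz] : exists2 z, z \in a :: s & p.[y] <= p.[z].
  exact: le_trans le_yz (x_max z zs).
have [ys|yNs] := boolP (y \in a :: s); first by exists y.
have lt_ay : a < y by rewrite lt_neqAle le_ay andbT; apply: contraNneq yNs => ->; apply: mem_head.
have lt_yb : y < b.
  by rewrite lt_neqAle le_yb andbT; apply: contraNneq yNs => ->; rewrite !inE eqxx orbT.
have [p'0|p'_neq0] := eqVneq p^`() 0.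
  exists b; first by rewrite !inE eqxx orbT.
  apply: (ler_hornerW (a := a) (b := b)) => [z _|||//].
  - by rewrite p'0 horner0.
  - by rewrite in_itv /= le_ay.
  - by rewrite in_itv /= le_ab lexx.
have p'y : ~~ root p^`() y.
  apply: contra yNs => p'y; rewrite !inE root_in_roots ?orbT //.
  by rewrite in_itv /= lt_ay.
have y_in : a < y < b by rewrite lt_ay.
set l := prev_root p^`() a y; set r := next_root p^`() y b.
have ls : l \in a :: s := prev_root_in_roots p'_neq0 y_in.
have rs : r \in a :: s := next_root_in_roots p'_neq0 y_in.
have lt_ly : l < y by apply: prev_root_lt.
have lt_yr : y < r by apply: next_root_gt.
have p'_noroot : {in `]l, r[, forall z, ~~ root p^`() z}.
  move=> z z_in; have [lt_zy|lt_yz|->//] := ltgtP z y.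
    by apply: (@prev_noroot _ _ a y); rewrite in_itv /= lt_zy (itvP z_in).
  by apply: (@next_noroot _ _ y b); rewrite in_itv /= lt_yz (itvP z_in).
have le_lyr : l <= y <= r by rewrite !ltW.
have := poly_le_max_noroot_deriv p'_noroot le_lyr.
by rewrite le_max => /orP[]; [exists l | exists r].
Qed.

End PolyMax.

Section CircleMax.
Variable R : rcfType.
Implicit Types c s u : R.

(* With x = 1 + c and y = 1 + s, x^(k+2) + y^(k+2) = (x + y)(x^(k+1) + y^(k+1))
   - xy (x^k + y^k), where x + y = 2 + u and, on the circle, xy = (1 + u)^2/2
   for u = c + s. *)
Fixpoint circle_sum_polys k : {poly R} * {poly R} :=
  if k is k'.+1 then
    let: (q, q') := circle_sum_polys k' in
    (q', (2%:P + 'X) * q' - ((1 + 'X) ^+ 2 * (2^-1)%:P) * q)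
  else (2%:P, 2%:P + 'X).

Definition circle_sum_poly k := (circle_sum_polys k).1.

Lemma circle_sum_polyE c s k : c ^+ 2 + s ^+ 2 = 1 ->
  (circle_sum_poly k).[c + s] = (1 + c) ^+ k + (1 + s) ^+ k.
Proof.
move=> cs1; rewrite /circle_sum_poly.
suff : (circle_sum_polys k).1.[c + s] = (1 + c) ^+ k + (1 + s) ^+ k /\
       (circle_sum_polys k).2.[c + s] = (1 + c) ^+ k.+1 + (1 + s) ^+ k.+1 by case.
have prod_cs : (1 + (c + s)) ^+ 2 / 2 = (1 + c) * (1 + s).
  apply: (@mulIf _ 2); first by rewrite pnatr_eq0.
  rewrite divfK ?pnatr_eq0 //.
  have -> : (1 + (c + s)) ^+ 2 = 1 + 2 * (c + s) + (c ^+ 2 + s ^+ 2) + 2 * c * s by ring.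
  by rewrite cs1; ring.
elim: k => [|k] /=; first by rewrite !(hornerD, hornerC, hornerX) !expr0 !expr1; split; ring.
case: circle_sum_polys => q q' /= [qE q'E]; split=> //.
rewrite !(hornerD, hornerN, hornerM, hornerC, hornerX, horner_exp) qE q'E.
by rewrite -expr2 prod_cs !exprS; ring.
Qed.

Lemma sqr_le2 u : (u ^+ 2 <= 2) = (- Num.sqrt 2 <= u <= Num.sqrt 2).
Proof. by rewrite -ler_norml -sqrtr_sqr ler_sqrt. Qed.

Lemma sum_sqr_le2 c s : c ^+ 2 + s ^+ 2 = 1 -> (c + s) ^+ 2 <= 2.
Proof.
move=> cs1; have -> : (c + s) ^+ 2 = 2 * (c ^+ 2 + s ^+ 2) - (c - s) ^+ 2 by ring.
by rewrite cs1 mulr1 lerBlDr lerDl sqr_ge0.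
Qed.

Lemma circle_point_of_sum u : u ^+ 2 <= 2 ->
  exists c s, c ^+ 2 + s ^+ 2 = 1 /\ c + s = u.
Proof.
move=> u2_le2; set d := Num.sqrt (2 - u ^+ 2).
have d2 : d ^+ 2 = 2 - u ^+ 2 by rewrite sqr_sqrtr // subr_ge0.
exists ((u + d) / 2), ((u - d) / 2); split; last by field.
have -> : ((u + d) / 2) ^+ 2 + ((u - d) / 2) ^+ 2 = (u ^+ 2 + d ^+ 2) / 2 by field.
by rewrite d2 addrC subrK divff // pnatr_eq0.
Qed.

Lemma circle_max m : exists c s, c ^+ 2 + s ^+ 2 = 1 /\
  forall c' s', c' ^+ 2 + s' ^+ 2 = 1 ->
    (1 + c') ^+ m + (1 + s') ^+ m <= (1 + c) ^+ m + (1 + s) ^+ m.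
Proof.
have le_sqrt2 : - Num.sqrt 2 <= Num.sqrt (2 : R).
  by rewrite (le_trans _ (sqrtr_ge0 2)) // oppr_le0 sqrtr_ge0.
have [u u_in u_max] := poly_itv_max (circle_sum_poly m) le_sqrt2.
have [c [s [cs1 csu]]] : exists c s, c ^+ 2 + s ^+ 2 = 1 /\ c + s = u.
  by apply: circle_point_of_sum; rewrite sqr_le2.
exists c, s; split=> // c' s' cs1'.
rewrite -!circle_sum_polyE // csu; apply: u_max.
by rewrite -sqr_le2 sum_sqr_le2.
Qed.

End CircleMax.

Lemma Creal_circle_max (C : numClosedFieldType) m : exists c s : C,
  [/\ c \is Num.real, s \is Num.real, c ^+ 2 + s ^+ 2 = 1 &
     forall c' s' : C, c' \is Num.real -> s' \is Num.real -> c' ^+ 2 + s' ^+ 2 = 1 ->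
       (1 + c') ^+ m + (1 + s') ^+ m <= (1 + c) ^+ m + (1 + s) ^+ m].
Proof.
have [c [s [cs1 cs_max]]] := circle_max (realsub C) m.
exists (val c), (val s); split; try exact: valP.
  by have := congr1 val cs1; rewrite rmorphD !rmorphXn rmorph1.
move=> c' s' c'R s'R cs1'.
have cs1'' : Sub c' c'R ^+ 2 + Sub s' s'R ^+ 2 = 1 :> realsub C.
  by apply: val_inj; rewrite rmorphD !rmorphXn rmorph1.
have := cs_max _ _ cs1''.
by rewrite [_ <= _]/(val _ <= val _) !rmorphD !rmorphXn !rmorphD rmorph1.
Qed.

(** * Expectation values and the square-root bound *)

Section Adjoint.
Variable C : numClosedFieldType.

Lemma adjmxM m n p (A : 'M[C]_(m, n)) (B : 'M[C]_(n, p)) :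
  adjmx (A *m B) = adjmx B *m adjmx A.
Proof. by rewrite /adjmx map_mxM trmx_mul. Qed.

Lemma adjmxK m n (A : 'M[C]_(m, n)) : adjmx (adjmx A) = A.
Proof. by apply/matrixP => i j; rewrite !mxE conjCK. Qed.

Lemma adjmxB m n (A B : 'M[C]_(m, n)) : adjmx (A - B) = adjmx A - adjmx B.
Proof. by apply/matrixP => i j; rewrite !mxE rmorphB. Qed.

Lemma adjmx_trC m n (A : 'M[C]_(m, n)) : adjmx A = (A ^t Num.conj)%sesqui.
Proof. by rewrite /adjmx map_trmx. Qed.

End Adjoint.

Section DiagFun.
Variables (C : numClosedFieldType) (n : nat).
Implicit Types (f g : 'I_n -> C) (A : 'M[C]_n).

Definition diagf f : 'M[C]_n := diag_mx (\row_i f i).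

Lemma eq_diagf f g : f =1 g -> diagf f = diagf g.
Proof. by move=> fg; apply/matrixP => i j; rewrite !mxE fg. Qed.

Lemma diagf_const (a : C) : diagf (fun=> a) = a%:M.
Proof. by apply/matrixP => i j; rewrite !mxE. Qed.

Lemma diagfD f g : diagf f + diagf g = diagf (fun i => f i + g i).
Proof. by apply/matrixP => i j; rewrite !mxE mulrnDl. Qed.

Lemma diagfB f g : diagf f - diagf g = diagf (fun i => f i - g i).
Proof. by apply/matrixP => i j; rewrite !mxE mulrnBl. Qed.

Lemma diagfM f g : diagf f *m diagf g = diagf (fun i => f i * g i).
Proof. by apply/matrixP => i j; rewrite mul_diag_mx !mxE mulrnAr. Qed.

Lemma diagfX f k : diagf f ^+ k = diagf (fun i => f i ^+ k).
Proof.
elim: k => [|k IHk].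
  by rewrite expr0 -[LHS]/(1%:M) -diagf_const; apply: eq_diagf => i; rewrite expr0.
by rewrite exprS IHk -mulmxE diagfM; apply: eq_diagf => i; rewrite exprS.
Qed.

Lemma mul_diagf_mx m f (A : 'M[C]_(n, m)) : diagf f *m A = \matrix_(i, j) (f i * A i j).
Proof. by apply/matrixP => i j; rewrite mul_diag_mx !mxE. Qed.

Lemma mul_mx_diagf m (A : 'M[C]_(m, n)) f : A *m diagf f = \matrix_(i, j) (A i j * f j).
Proof. by apply/matrixP => i j; rewrite mul_mx_diag !mxE. Qed.

Lemma adjmx_diagf f : (forall i, f i \is Num.real) -> adjmx (diagf f) = diagf f.
Proof.
move=> fR; apply/matrixP => i j; rewrite !mxE eq_sym rmorphMn /=.
by have [->|] := eqVneq i j; rewrite ?mulr0n // !mulr1n conj_Creal.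
Qed.

End DiagFun.

Section Expectation.
Variables (C : numClosedFieldType) (n : nat) (v : 'cV[C]_n).
Implicit Types (A B : 'M[C]_n).

Lemma expectD A B : expect (A + B) v = expect A v + expect B v.
Proof. by rewrite /expect mulmxDr mulmxDl mxE. Qed.

Lemma expect0 : expect 0 v = 0.
Proof. by rewrite /expect mulmx0 mul0mx mxE. Qed.

Lemma expectB A B : expect (A - B) v = expect A v - expect B v.
Proof. by rewrite /expect mulmxBr mulmxBl !mxE. Qed.

Lemma expect_sum I (r : seq I) (P : pred I) (F : I -> 'M[C]_n) :
  expect (\sum_(i <- r | P i) F i) v = \sum_(i <- r | P i) expect (F i) v.
Proof. exact: (big_morph (fun A => expect A v) expectD expect0). Qed.

Lemma expectMn A k : expect (A *+ k) v = expect A v *+ k.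
Proof. by elim: k => [|k IHk]; rewrite ?mulr0n ?expect0 // !mulrS expectD IHk. Qed.

Lemma expect_diagf f : expect (diagf f) v = \sum_i `|v i 0| ^+ 2 * f i.
Proof.
rewrite /expect mul_mx_diagf !mxE; apply: eq_bigr => i _.
by rewrite !mxE normCK; ring.
Qed.

Lemma expect_diagf_ge0 f : (forall i, 0 <= f i) -> 0 <= expect (diagf f) v.
Proof.
by move=> f_ge0; rewrite expect_diagf sumr_ge0 // => i _; rewrite mulr_ge0 ?exprn_ge0.
Qed.

Lemma expect_adj_conj A B :
  expect (adjmx B *m A *m B) v = expect A (B *m v).
Proof. by rewrite /expect adjmxM !mulmxA. Qed.

End Expectation.

Section SqrtDominance.
Variables (C : numClosedFieldType) (n : nat) (T : 'M[C]_n) (e : 'I_n -> C).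
Hypotheses (T_herm : adjmx T = T) (TT : T *m T = diagf e).

Lemma sqr_diagE i : e i = \sum_k `|T i k| ^+ 2.
Proof.
have /matrixP/(_ i i) := TT; rewrite !mxE eqxx mulr1n => <-.
by apply: eq_bigr => k _; rewrite normCK -{2}T_herm !mxE.
Qed.

Lemma sqr_diag_ge0 i : 0 <= e i.
Proof. by rewrite sqr_diagE sumr_ge0 // => k _; rewrite exprn_ge0. Qed.

Lemma sqr_diag0_row i k : e i = 0 -> T i k = 0.
Proof.
rewrite sqr_diagE => /psumr_eq0P/(_ k isT)/eqP.
by rewrite expf_eq0 normr_eq0 => /(_ (fun k _ => exprn_ge0 2 (normr_ge0 _))) /andP[_ /eqP].
Qed.

Lemma sqr_diag_link i j : T i j != 0 -> e i = e j.
Proof.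
move=> Tij_neq0; have /matrixP/(_ i j) : T *m (T *m T) = (T *m T) *m T by rewrite mulmxA.
rewrite TT mul_mx_diagf mul_diagf_mx !mxE => /eqP.
by rewrite [e i * _]mulrC -subr_eq0 -mulrBr mulf_eq0 (negPf Tij_neq0) subr_eq0 => /eqP.
Qed.

Lemma comm_diagf_sqr (h : C -> C) :
  T * diagf (fun i => h (e i)) = diagf (fun i => h (e i)) * T.
Proof.
rewrite -!mulmxE mul_mx_diagf mul_diagf_mx; apply/matrixP => i j; rewrite !mxE.
have [->|/sqr_diag_link->] := eqVneq (T i j) 0; first by rewrite mulr0 mul0r.
by rewrite mulrC.
Qed.

Lemma diagf_mul_support (M : 'M[C]_n) f g :
  (forall i j, e i = 0 -> M i j = 0) -> (forall i, e i != 0 -> f i = g i) ->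
  diagf f *m M = diagf g *m M.
Proof.
move=> M0 fg; rewrite !mul_diagf_mx; apply/matrixP => i j; rewrite !mxE.
by have [/M0->|/fg->] := eqVneq (e i) 0; rewrite ?mulr0.
Qed.

Local Notation b i := (sqrtC (e i)).
Local Notation B := (diagf (fun i => sqrtC (e i))).

(* [W = B - T] satisfies [W^2 = 2 B W]; this identity makes [B^k W] a
   nonnegative operator although [B] may be singular. *)
Lemma sqrt_gap_square k :
  (B ^+ k * (B - T)) *+ 2 = adjmx (B - T) *m diagf (fun i => b i ^+ k / b i) *m (B - T).
Proof.
set W := B - T; set G := diagf (fun i => b i ^+ k / b i).
have b_real i : b i \is Num.real by rewrite ger0_real // sqrtC_ge0 sqr_diag_ge0.
have W_herm : adjmx W = W by rewrite adjmxB T_herm adjmx_diagf.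
have BB : B * B = T * T.
  by rewrite -!mulmxE diagfM TT; apply: eq_diagf => i; rewrite -expr2 sqrtCK.
have TB : T * B = B * T := comm_diagf_sqr sqrtC.
have WW : W * W = (B * W) *+ 2 by rewrite /W !(mulrBl, mulrBr) TB -BB mulr2n opprB.
have GT : T * G = G * T := comm_diagf_sqr (fun x => sqrtC x ^+ k / sqrtC x).
have GB : B * G = G * B by rewrite -!mulmxE !diagfM; apply: eq_diagf => i; rewrite mulrC.
have GW : W * G = G * W by rewrite /W mulrBl mulrBr GB GT.
have W0 i j : e i = 0 -> W i j = 0.
  by move=> ei0; rewrite !mxE sqr_diag0_row // ei0 sqrtC0 mul0rn subr0.
have GBW : G * B * W = B ^+ k * W.
  rewrite -!mulmxE diagfM diagfX; apply: diagf_mul_support => // i ei_neq0.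
  by rewrite divfK // sqrtC_eq0.
by rewrite W_herm -!mulmxE -mulmxA mulmxE [RHS]mulrA GW -mulrA WW mulrnAr mulrA GBW.
Qed.

Lemma expect_exp_le_sqrt (v : 'cV[C]_n) k : expect (T ^+ k) v <= expect (B ^+ k) v.
Proof.
have BB : T * T = B * B.
  by rewrite -!mulmxE diagfM TT; apply: eq_diagf => i; rewrite -expr2 sqrtCK.
have T_even j : T ^+ j.*2 = B ^+ j.*2 by rewrite -mul2n !exprM !expr2 BB.
rewrite -(odd_double_half k); case: odd; last by rewrite T_even.
rewrite !add1n !exprSr T_even -subr_ge0 -expectB -mulrBr.
rewrite -(pmulrn_lge0 _ (isT : (0 < 2)%N)) -expectMn sqrt_gap_square.
by rewrite expect_adj_conj expect_diagf_ge0 // => i; rewrite divr_ge0 ?exprn_ge0 ?sqrtC_ge0 ?sqr_diag_ge0.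
Qed.

End SqrtDominance.

Lemma expect_binomial_le (C : numClosedFieldType) n (v : 'cV[C]_n) (X Y : 'M[C]_n) m :
  (forall k, expect (X ^+ k) v <= expect (Y ^+ k) v) ->
  expect ((1 + X) ^+ m) v <= expect ((1 + Y) ^+ m) v.
Proof.
move=> XY; rewrite !(addrC 1) !exprD1n !expect_sum; apply: ler_sum => k _.
by rewrite !expectMn ler_wMn2r.
Qed.

Lemma expect_diag_sqr_compl_le (C : numClosedFieldType) n (d : 'I_n -> C)
    (T : 'M[C]_n) (v : 'cV[C]_n) m :
  adjmx T = T -> T *m T = diagf (fun i => 1 - d i ^+ 2) ->
  expect ((1 + diagf d) ^+ m + (1 + T) ^+ m) v <=
  \sum_i `|v i 0| ^+ 2 * ((1 + d i) ^+ m + (1 + sqrtC (1 - d i ^+ 2)) ^+ m).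
Proof.
move=> T_herm TT; rewrite expectD.
apply: le_trans (lerD (lexx _) (expect_binomial_le m (expect_exp_le_sqrt T_herm TT v))) _.
rewrite -[1]/(1%:M : 'M[C]_n) -diagf_const !diagfD !diagfX !expect_diagf -big_split.
by apply: ler_sum => i _; rewrite mulrDr.
Qed.

Lemma sum_convex_le (R : numDomainType) n (a f : 'I_n -> R) (M : R) :
  (forall i, 0 <= a i) -> \sum_i a i = 1 -> (forall i, f i <= M) ->
  \sum_i a i * f i <= M.
Proof.
move=> a_ge0 a1 f_le; rewrite -[M]mul1r -a1 big_distrl /=.
by apply: ler_sum => i _; rewrite ler_wpM2l.
Qed.

Lemma sum_normCK_unit (C : numClosedFieldType) n (v : 'cV[C]_n) :
  adjmx v *m v = 1%:M -> \sum_i `|v i 0| ^+ 2 = 1.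
Proof.
move=> v1; have /matrixP/(_ 0 0) := v1; rewrite !mxE eqxx mulr1n => <-.
by apply: eq_bigr => i _; rewrite !mxE normCK mulrC.
Qed.

Section UnitaryConj.
Variables (C : numClosedFieldType) (n : nat) (U : 'M[C]_n).
Hypotheses (UU' : U *m adjmx U = 1%:M) (U'U : adjmx U *m U = 1%:M).
Implicit Types X Y : 'M[C]_n.

Definition unitary_conj X := U *m X *m adjmx U.

Lemma unitary_conjD X Y : unitary_conj (X + Y) = unitary_conj X + unitary_conj Y.
Proof. by rewrite /unitary_conj mulmxDr mulmxDl. Qed.

Lemma unitary_conjB X Y : unitary_conj (X - Y) = unitary_conj X - unitary_conj Y.
Proof. by rewrite /unitary_conj mulmxBr mulmxBl. Qed.

Lemma unitary_conjM X Y : unitary_conj (X * Y) = unitary_conj X * unitary_conj Y.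
Proof. by rewrite /unitary_conj -!mulmxE !mulmxA -(mulmxA _ (adjmx U)) U'U mulmx1. Qed.

Lemma unitary_conj1 : unitary_conj 1 = 1.
Proof. by rewrite /unitary_conj -[1]/(1%:M : 'M[C]_n) mulmx1 UU'. Qed.

Lemma unitary_conjX X k : unitary_conj (X ^+ k) = unitary_conj X ^+ k.
Proof.
by elim: k => [|k IHk]; rewrite ?expr0 ?unitary_conj1 // !exprS unitary_conjM IHk.
Qed.

Lemma expect_unitary_conj X v : expect X v = expect (unitary_conj X) (U *m v).
Proof.
by rewrite /unitary_conj -expect_adj_conj !mulmxA U'U mul1mx -mulmxA U'U mulmx1.
Qed.

Lemma unitary_conj_sqr_compl S T d :
  S *m S + T *m T = 1%:M -> unitary_conj S = diagf d ->
  unitary_conj T *m unitary_conj T = diagf (fun i => 1 - d i ^+ 2).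
Proof.
move=> SSTT US; have TT : T * T = 1 - S * S.
  by rewrite -[1]/(1%:M : 'M[C]_n) -!mulmxE -SSTT [S *m S + _]addrC addrK.
rewrite mulmxE -unitary_conjM TT unitary_conjB unitary_conj1 unitary_conjM US.
rewrite -mulmxE diagfM -[1]/(1%:M : 'M[C]_n) -diagf_const diagfB.
by apply: eq_diagf => i; rewrite expr2.
Qed.

Lemma unitary_mul_adj p (v : 'M[C]_(n, p)) : adjmx (U *m v) *m (U *m v) = adjmx v *m v.
Proof. by rewrite adjmxM mulmxA -(mulmxA _ (adjmx U)) U'U mulmx1. Qed.

Lemma unitary_conj_herm X : adjmx X = X -> adjmx (unitary_conj X) = unitary_conj X.
Proof. by move=> X_herm; rewrite /unitary_conj !adjmxM adjmxK X_herm mulmxA. Qed.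

End UnitaryConj.

Lemma hermitian_spectral (C : numClosedFieldType) n (S : 'M[C]_n) : adjmx S = S ->
  exists U : 'M[C]_n, exists d : 'I_n -> C,
  [/\ U *m adjmx U = 1%:M, adjmx U *m U = 1%:M, (forall i, d i \is Num.real) &
      unitary_conj U S = diagf d].
Proof.
move=> S_herm; have S_hermsym : S \is hermsymmx.
  by rewrite is_hermitianmxE expr0 scale1r -adjmx_trC S_herm.
set U := spectralmx S.
have U_unitary : U \is unitarymx := spectral_unitarymx S.
have UU' : U *m adjmx U = 1%:M by rewrite adjmx_trC; apply/unitarymxP.
have U'U : adjmx U *m U = 1%:M.
  by rewrite adjmx_trC -invmx_unitary // mulVmx // unitarymx_unit.
exists U, (fun i => spectral_diag S 0 i); split=> // [i|].
  by have /mxOverP := hermitian_spectral_diag_real S_hermsym; apply.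
have /orthomx_spectralP SE := hermitian_normalmx S_hermsym.
rewrite /unitary_conj [in LHS]SE invmx_unitary // -adjmx_trC -/U !mulmxA UU' mul1mx.
by rewrite -mulmxA UU' mulmx1; apply/matrixP => i j; rewrite !mxE.
Qed.

Unset Implicit Arguments.

Theorem lemma2 (C : numClosedFieldType) (n m : nat) (S T : 'M[C]_n) (psi : 'cV[C]_n) :
  is_hermitian S -> is_hermitian T ->
  S *m S + T *m T = 1%:M ->
  adjmx psi *m psi = 1%:M ->
  (0 < m)%N ->
  exists c s : C,
    [/\ c \is Num.real, s \is Num.real, c ^+ 2 + s ^+ 2 = 1,
        (forall c' s' : C, c' \is Num.real -> s' \is Num.real -> c' ^+ 2 + s' ^+ 2 = 1 ->
           (1 + c') ^+ m + (1 + s') ^+ m <= (1 + c) ^+ m + (1 + s) ^+ m) &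
        expect ((1%:M + S) ^+ m + (1%:M + T) ^+ m) psi <= (1 + c) ^+ m + (1 + s) ^+ m].
Proof.
move=> S_herm T_herm SSTT psi1 _.
have [c [s [cR sR cs1 cs_max]]] := Creal_circle_max C m.
exists c, s; split=> //.
have [U [d [UU' U'U dR US]]] := hermitian_spectral S_herm.
have T'_herm := unitary_conj_herm U T_herm.
have T'T' := unitary_conj_sqr_compl UU' U'U SSTT US.
rewrite (expect_unitary_conj U'U) unitary_conjD.
rewrite !unitary_conjX // !unitary_conjD unitary_conj1 // US.
apply: le_trans (expect_diag_sqr_compl_le _ m T'_herm T'T') _.
apply: sum_convex_le => [i||i]; first exact: exprn_ge0.
  by apply: sum_normCK_unit; rewrite unitary_mul_adj.
apply: cs_max => //; last by rewrite sqrtCK addrC subrK.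
by rewrite ger0_real // sqrtC_ge0 (sqr_diag_ge0 T'_herm T'T').
Qed.
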